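(* Let $M>0$, $0<\delta\le+\infty$, and $\zeta:(0,\delta)\to(0,\infty)$ with $\lim_{\lambda\to0}\zeta(\lambda)/\lambda=0$. Let $(u_n)_{n\ge0}$ be nonnegative numbers with $u_0\le M$ and $$u_{n+1}\le(1-\lambda)u_n+M\zeta(\lambda)\qquad\text{for all }n\ge0\text{ and all }\lambda\in(0,\delta).$$ Define $\zeta^*(u):=\sup_{\lambda\in(0,\delta)}(\lambda u-\zeta(\lambda))\in(-\infty,+\infty]$, $F(u):=\int_u^1\frac{dv}{\zeta^*(v)}$ for $u\in(0,1]$ (with $1/\zeta^*(v):=0$ when $\zeta^*(v)=+\infty$), and $F^{-1}(t):=\inf\{u\in(0,1]:F(u)\le t\}$. Then $u_n\le M\,F^{-1}(n)$ for all integers $n\ge0$. *)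

From HB Require Import structures.
From mathcomp Require Import all_boot all_order all_algebra.
From mathcomp Require Import all_classical all_reals all_analysis.
Set Implicit Arguments. Unset Strict Implicit. Unset Printing Implicit Defensive.
Import Order.TTheory GRing.Theory Num.Theory.
Import numFieldNormedType.Exports.
Local Open Scope classical_set_scope.
Local Open Scope ring_scope.

Definition dom_ (R : realType) (delta : \bar R) : set R :=
  [set l : R | 0 < l /\ (l%:E < delta)%E].

Definition zeta_star (R : realType) (delta : \bar R) (zeta : R -> R) (u : R) : \bar R :=
  ereal_sup [set ((l * u - zeta l)%:E) | l in dom_ delta].

Definition ereal_recip (R : realType) (x : \bar R) : R :=
  match x with
  | EFin r => r^-1
  | _ => 0
  end.

Definition Ffun (R : realType) (delta : \bar R) (zeta : R -> R) (u : R) : \bar R :=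
  (\int[lebesgue_measure]_(v in `[u, 1%R]) (ereal_recip (zeta_star delta zeta v))%:E)%E.

Definition Finv (R : realType) (delta : \bar R) (zeta : R -> R) (t : R) : R :=
  inf [set u : R | 0 < u <= 1 /\ (Ffun delta zeta u <= t%:E)%E].

From HB Require Import structures.
From mathcomp Require Import all_boot all_order all_algebra.
From mathcomp Require Import all_classical all_reals all_analysis.
From mathcomp Require Import lra measurable_realfun.
Set Implicit Arguments. Unset Strict Implicit. Unset Printing Implicit Defensive.
Import Order.TTheory GRing.Theory Num.Theory.
Import numFieldNormedType.Exports.
Local Open Scope classical_set_scope.
Local Open Scope ring_scope.

(* Dividing by M we may assume M = 1, i.e. u 0 <= 1 and
   u (k+1) <= (1 - l) u k + zeta l for every admissible l.  Taking the best l
   gives the discrete "differential inequality"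
       zeta^*(u k) <= u k - u (k+1).
   Since zeta l = o(l), zeta^* is positive on (0, +oo), so the integrand
   1/zeta^* of F is nonnegative and nonincreasing there; in particular, for
   0 < a <= b <= 1 with zeta^*(b) = z finite,
       F(a) >= F(b) + (b - a) / z.                                 (split)
   With a = u (k+1), b = u k this gives F(u (k+1)) >= F(u k) + 1, hence by
   induction F(a) >= n for every 0 < a <= u n.  If some w < u n had F(w) <= n,
   (split) with a = w, b = u n would give F(w) > n; so every point of the set
   defining F^{-1}(n) lies above u n, i.e. u n <= F^{-1}(n). *)

Section ConjugateIntegrand.
Variables (R : realType) (delta : \bar R) (zeta : R -> R).

Local Notation zs := (zeta_star delta zeta).
Local Notation F := (Ffun delta zeta).

Lemma zeta_sublinear_of_limit :
  (0 < delta)%E -> (fun l => zeta l / l) @ 0^'+ --> 0 ->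
  forall e, 0 < e -> exists l, [/\ dom_ delta l, l < 1 & zeta l < e * l].
Proof.
move=> delta0 /cvgrPdist_lt zeta_lim e e0.
have below_delta : \forall l \near (0:R)^'+, (l%:E < delta)%E.
  case: delta delta0 => [d| |] // d0; last by near=> l; rewrite ltey.
  by rewrite lte_fin in d0; near=> l; rewrite lte_fin; near: l; exact: nbhs_right_lt.
have near_dom : \forall l \near (0:R)^'+, 0 < l /\ (l%:E < delta)%E /\ l < 1.
  near=> l; split; last split.
  - by near: l; exact: nbhs_right_gt.
  - by near: l; exact: below_delta.
  - by near: l; exact: nbhs_right_lt.
have [l [[l0 [ld l1]] lz]] := filter_ex (filterI near_dom (zeta_lim e e0)).
exists l; split => //.
move: lz; rewrite sub0r normrN => /(le_lt_trans (ler_norm _)).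
by rewrite ltr_pdivrMr.
Unshelve. all: by end_near.
Qed.

Lemma zeta_star_ge v l : dom_ delta l -> ((l * v - zeta l)%:E <= zs v)%E.
Proof. by move=> dl; apply: ereal_sup_ubound; exists l. Qed.

Lemma zeta_star_le v c :
  (forall l, dom_ delta l -> l * v - zeta l <= c) -> (zs v <= c%:E)%E.
Proof. by move=> H; apply: ge_ereal_sup => _ [l dl <-]; rewrite lee_fin H. Qed.

(* zeta^* is nondecreasing, the admissible slopes being positive. *)
Lemma zeta_star_mono v w : v <= w -> (zs v <= zs w)%E.
Proof.
move=> vw; apply: ge_ereal_sup => _ [l dl <-].
apply: le_trans (zeta_star_ge w dl); rewrite lee_fin lerD2r ler_wpM2l //.
by case: dl => /ltW.
Qed.

Lemma Ffun1 : F 1 = 0%E.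
Proof. by rewrite /Ffun set_itv1 integral_set1. Qed.

Hypothesis zeta_sublinear :
  forall e, 0 < e -> exists l, [/\ dom_ delta l, l < 1 & zeta l < e * l].

Lemma zeta_star_gt0 v : 0 < v -> (0 < zs v)%E.
Proof.
move=> v0; have [l [dl _ zl]] := zeta_sublinear v0.
by apply: lt_le_trans (zeta_star_ge v dl); rewrite lte_fin subr_gt0 mulrC.
Qed.

Lemma recip_zeta_star_ge0 v : 0 < v -> 0 <= ereal_recip (zs v).
Proof.
move=> /zeta_star_gt0; case: (zs v) => [z| |] //=.
by rewrite lte_fin => z0; rewrite invr_ge0 ltW.
Qed.

Lemma recip_zeta_star_anti v w : 0 < v -> v <= w ->
  ereal_recip (zs w) <= ereal_recip (zs v).
Proof.
move=> v0 vw; have := zeta_star_mono vw.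
have := zeta_star_gt0 v0; have := zeta_star_gt0 (lt_le_trans v0 vw).
case: (zs w) => [w'| |] //=; case: (zs v) => [v'| |] //=.
- by rewrite !lte_fin lee_fin => w0 v0' vw'; rewrite lef_pV2 ?posrE.
- by rewrite lte_fin => _ v0' _; rewrite invr_ge0 ltW.
Qed.

(* Being monotone away from 0, the integrand is measurable on any measurable
   set bounded below by a positive constant. *)
Lemma recip_zeta_star_measurable a (D : set R) :
  0 < a -> measurable D -> D `<=` [set v | a <= v] ->
  measurable_fun D (fun v => (ereal_recip (zs v))%:E).
Proof.
move=> a0 mD Da; apply/measurable_EFinP.
apply: (@eq_measurable_fun _ _ _ _ D
  (fun v => ereal_recip (zs (Num.max a v)))).
  by move=> v; rewrite inE => /Da /= av; rewrite max_r.
apply: nonincreasing_measurable => // x y xy.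
by apply: recip_zeta_star_anti; [rewrite lt_max a0 | exact: le_max2].
Qed.

Lemma Ffun_ge0 a : 0 < a -> (0 <= F a)%E.
Proof.
move=> a0; apply: integral_ge0 => w /=; rewrite in_itv /= => /andP[aw _].
by rewrite lee_fin recip_zeta_star_ge0 // (lt_le_trans a0 aw).
Qed.

(* (split): on [a, b[ the integrand is at least 1 / zeta^*(b). *)
Lemma Ffun_split a b z : 0 < a -> a <= b -> b <= 1 -> zs b = z%:E ->
  (((b - a) / z)%:E + F b <= F a)%E.
Proof.
move=> a0 ab b1 zb.
have z0 : 0 < z by have := zeta_star_gt0 (lt_le_trans a0 ab); rewrite zb lte_fin.
have a1_split : `[a, 1]%classic = `[a, b[%classic `|` `[b, 1]%classic.
  by apply: itv_bndbnd_setU; rewrite bnd_simp.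
have a1_ge : `[a, 1]%classic `<=` [set v | a <= v].
  by move=> v /=; rewrite in_itv /= => /andP[].
rewrite /Ffun a1_split ge0_integral_setU //=; first last.
- apply/disj_setPS => v [] /=; rewrite !in_itv /= => /andP[_ vb] /andP[bv _].
  by move: (lt_le_trans vb bv); rewrite ltxx.
- move=> w wab; have aw : a <= w by apply: a1_ge; rewrite a1_split.
  by rewrite lee_fin recip_zeta_star_ge0 // (lt_le_trans a0 aw).
- by rewrite -a1_split; exact: (recip_zeta_star_measurable a0).
apply: leeD => //.
have -> : ((b - a) / z)%:E =
    (\int[lebesgue_measure]_(v in `[a, b[) (cst (z^-1)%:E) v)%E.
  rewrite integral_cst //= lebesgue_measure_itv /= lte_fin.
  case: ltgtP ab => // [_ _|-> _]; last by rewrite subrr mul0r mule0.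
  by rewrite -EFinD -EFinM mulrC.
apply: ge0_le_integral => //.
- by move=> v _; rewrite lee_fin invr_ge0 ltW.
- apply: (recip_zeta_star_measurable a0) => //= w /andP[aw _].
  by move: aw; rewrite bnd_simp.
- move=> v /= /andP[]; rewrite !bnd_simp => av vb.
  rewrite lee_fin -[z^-1]/(ereal_recip (z%:E)) -zb.
  by apply: recip_zeta_star_anti; [exact: lt_le_trans av | exact: ltW].
Qed.

Section NormalizedSequence.
Variable v : nat -> R.
Hypothesis v0_le1 : v 0%N <= 1.
Hypothesis v_step :
  forall k l, dom_ delta l -> v k.+1 <= (1 - l) * v k + zeta l.

(* The sequence stays in [0, 1]: use a step l < 1 with zeta l < l. *)
Lemma v_le1 k : v k <= 1.
Proof.
elim: k => [//|k IH]; have [l [dl l1 zl]] := zeta_sublinear ltr01.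
apply: le_trans (v_step k dl) _.
have : (1 - l) * v k <= 1 - l.
  by rewrite -[X in _ <= X]mulr1 ler_wpM2l // subr_ge0 ltW.
by rewrite mul1r in zl; lra.
Qed.

Lemma zeta_star_v k : 0 < v k ->
  exists z, [/\ zs (v k) = z%:E, 0 < z & z <= v k - v k.+1].
Proof.
move=> vk0.
have : (zs (v k) <= (v k - v k.+1)%:E)%E.
  by apply: zeta_star_le => l dl; have := v_step k dl; lra.
have := zeta_star_gt0 vk0; case: (zs (v k)) => [z| |] //=.
by rewrite lee_fin lte_fin => z0 zle; exists z.
Qed.

Lemma lt_v_of_le_vS k a : 0 < a -> a <= v k.+1 -> a < v k.
Proof.
move=> a0 ak; have [l [dl l1 zl]] := zeta_sublinear a0.
have : (1 - l) * a < (1 - l) * v k by have := v_step k dl; lra.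
by rewrite ltr_pM2l // subr_gt0.
Qed.

Lemma Ffun_ge_index k a : 0 < a -> a <= v k -> (k%:R%:E <= F a)%E.
Proof.
elim: k a => [|k IH] a a0 ak; first exact: Ffun_ge0.
have avk := lt_v_of_le_vS a0 ak; have vk0 := lt_trans a0 avk.
have [z [zk z0 zle]] := zeta_star_v vk0.
apply: le_trans (Ffun_split a0 (ltW avk) (v_le1 k) zk).
rewrite -natr1 EFinD addeC; apply: leeD; last exact: IH vk0 (lexx _).
by rewrite lee_fin ler_pdivlMr // mul1r; lra.
Qed.

(* Every u in (0, 1] with F(u) <= n lies above v n, hence so does their
   infimum F^{-1}(n); the point 1 (where F vanishes) makes the set nonempty. *)
Lemma v_le_Finv n : v n <= Finv delta zeta n%:R.
Proof.
apply: lb_le_inf.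
  by exists 1; split; rewrite ?ltr01 ?lexx // Ffun1 lee_fin ler0n.
move=> w [/andP[w0 w1] Fw]; rewrite leNgt; apply/negP => wv.
have vn0 := lt_trans w0 wv.
have [z [zn z0 _]] := zeta_star_v vn0.
have gap : (n%:R%:E < ((v n - w) / z)%:E + n%:R%:E)%E.
  by rewrite -EFinD lte_fin ltrDr divr_gt0 // subr_gt0.
have Fw_ge : (((v n - w) / z)%:E + n%:R%:E <= F w)%E.
  apply: le_trans (Ffun_split w0 (ltW wv) (v_le1 n) zn).
  exact: leeD (lexx _) (Ffun_ge_index vn0 (lexx _)).
by have := lt_le_trans gap (le_trans Fw_ge Fw); rewrite ltxx.
Qed.

End NormalizedSequence.
End ConjugateIntegrand.

Theorem lemma4p11 (R : realType) (M : R) (delta : \bar R) (zeta : R -> R)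
    (u : nat -> R) :
  0 < M -> (0 < delta)%E ->
  (forall l, dom_ delta l -> 0 < zeta l) ->
  (fun l => zeta l / l) @ 0^'+ --> 0 ->
  (forall n, 0 <= u n) ->
  u 0%N <= M ->
  (forall n l, dom_ delta l -> u n.+1 <= (1 - l) * u n + M * zeta l) ->
  forall n : nat, u n <= M * Finv delta zeta n%:R.
Proof.
move=> M0 delta0 _ zeta_lim _ u0M u_step n.
have sublin := zeta_sublinear_of_limit delta0 zeta_lim.
have uE k : u k = M * (u k / M) by rewrite mulrC divfK // gt_eqF.
rewrite uE ler_pM2l //; apply: (v_le_Finv sublin (v := fun k => u k / M)).
- by rewrite ler_pdivrMr // mul1r.
- move=> k l dl; rewrite ler_pdivrMr // mulrDl -mulrA divfK ?gt_eqF //.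
  by rewrite [zeta l * M]mulrC; exact: u_step.
Qed.
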